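(* Let $P:[0,\infty)\to[-\tfrac14,\infty)$ be defined by $P(r)=r-\frac{1}{4(r+1)}$. For any $a_0\ge0$, define $a_{n+1}=P(a_n)$ recursively (as long as $a_n\ge0$). Then there exists an integer $N_0$ such that $0\le a_{N_0}<1$ and $-\tfrac14\le a_{N_0+1}<0$. Conversely, for any $a\in[0,1)$ and any $b>a$, there exists a sequence $a_0,\dots,a_{N_0}$ defined by the recursion $a_{n+1}=P(a_n)$ such that $a_0>b$ and $a_{N_0}=a$. *)

From Stdlib Require Import Reals.
Open Scope R_scope.

Definition P (r : R) : R := r - 1 / (4 * (r + 1)).

Fixpoint orbit (a0 : R) (n : nat) : R :=
  match n with
  | O => a0
  | S k => P (orbit a0 k)
  end.

(* While the orbit stays in [0, a0], each step of P lowers it by at least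
   1/(4(a0+1)), so it must leave [0, infinity); it does so from [0, 1) because
   P maps [1, infinity) into [0, infinity), and it lands in [-1/4, 0) because
   P >= -1/4 on [0, infinity).  Conversely P is an increasing bijection of
   [0, infinity) onto [-1/4, infinity) with an explicit inverse (solve a
   quadratic); iterating the inverse from a raises the value by at least
   1/(4(b+1)) per step as long as it stays below b, so it eventually exceeds b. *)

From Stdlib Require Import Reals Lra Lia.
Open Scope R_scope.

Definition decr (r : R) : R := 1 / (4 * (r + 1)).

Lemma P_decr (r : R) : P r = r - decr r.
Proof. reflexivity. Qed.

Lemma decr_gt0 (r : R) : 0 <= r -> 0 < decr r.
Proof. intro Hr. unfold decr. apply Rdiv_lt_0_compat; lra. Qed.

Lemma decr_antitone (r M : R) : 0 <= r -> r <= M -> decr M <= decr r.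
Proof.
  intros Hr HrM. unfold decr.
  apply Rmult_le_reg_r with (4 * (r + 1) * (4 * (M + 1))); [nra|].
  field_simplify; nra.
Qed.

Lemma P_ge_neg_quarter (r : R) : 0 <= r -> -(1/4) <= P r.
Proof.
  intro Hr. rewrite P_decr.
  assert (decr r <= decr 0) by (apply decr_antitone; lra).
  unfold decr in *. lra.
Qed.

Lemma P_ge0 (r : R) : 1 <= r -> 0 <= P r.
Proof.
  intro Hr. rewrite P_decr.
  assert (decr r <= decr 1) by (apply decr_antitone; lra).
  unfold decr in *. lra.
Qed.

Definition orbit_nonneg_upto (x : R) (N : nat) : Prop :=
  forall n, (n <= N)%nat -> 0 <= orbit x n.

Lemma orbit_nonneg_upto_S (x : R) (N : nat) :
  orbit_nonneg_upto x N -> 0 <= orbit x (S N) -> orbit_nonneg_upto x (S N).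
Proof.
  intros Hle HN n Hn.
  destruct (Nat.eq_dec n (S N)) as [->|Hne]; [exact HN | apply Hle; lia].
Qed.

Lemma orbit_exit_or_descent (x : R) (k : nat) : 0 <= x ->
  (exists N0 : nat,
     orbit_nonneg_upto x N0 /\ 0 <= orbit x N0 < 1 /\ -(1/4) <= orbit x (S N0) < 0)
  \/ (orbit_nonneg_upto x k /\ orbit x k <= x - INR k * decr x).
Proof.
  intro Hx. induction k as [|k [Hexit | [Hnonneg Hdesc]]].
  - right. split; [intros n Hn; replace n with 0%nat by lia; exact Hx | simpl; lra].
  - left. exact Hexit.
  - set (r := orbit x k) in *.
    assert (Hr : 0 <= r) by (apply Hnonneg; lia).
    assert (Hdrop_ge0 : 0 <= INR k * decr x)
      by (apply Rmult_le_pos; [apply pos_INR | apply Rlt_le, decr_gt0; lra]).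
    destruct (Rlt_le_dec (P r) 0) as [Hneg | Hpos].
    + left. exists k. split; [exact Hnonneg|].
      split; [split; [exact Hr|] | split; [apply P_ge_neg_quarter, Hr | exact Hneg]].
      destruct (Rlt_le_dec r 1) as [Hlt1 | Hge1]; [exact Hlt1|].
      pose proof (P_ge0 r Hge1). lra.
    + right. split; [exact (orbit_nonneg_upto_S x k Hnonneg Hpos)|].
      assert (decr x <= decr r) by (apply decr_antitone; lra).
      simpl orbit. fold r. rewrite P_decr, S_INR. lra.
Qed.

(* For s = x + 1, P x = y reads 4 s (s - (y + 1)) = 1; P_inv takes the positive root s. *)
Definition P_inv (y : R) : R := ((y + 1) + sqrt ((y + 1) ^ 2 + 1)) / 2 - 1.

Lemma le_P_inv (y : R) : 0 <= y -> y <= P_inv y.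
Proof.
  intro Hy. unfold P_inv.
  set (t := sqrt ((y + 1) ^ 2 + 1)).
  assert (t * t = (y + 1) ^ 2 + 1) by (apply sqrt_sqrt; nra).
  assert (0 <= t) by apply sqrt_pos.
  nra.
Qed.

Lemma P_inv_K (y : R) : 0 <= y -> P (P_inv y) = y.
Proof.
  intro Hy. pose proof (le_P_inv y Hy) as Hle.
  set (t := sqrt ((y + 1) ^ 2 + 1)).
  assert (Ht : t * t = (y + 1) ^ 2 + 1) by (apply sqrt_sqrt; nra).
  unfold P, P_inv in *. fold t in Hle |- *.
  field_simplify_eq; [nra | lra].
Qed.

Fixpoint preorbit (y : R) (k : nat) : R :=
  match k with
  | O => y
  | S j => P_inv (preorbit y j)
  end.

Lemma preorbit_ge (y : R) (k : nat) : 0 <= y -> y <= preorbit y k.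
Proof.
  intro Hy. induction k as [|k IH]; simpl; [lra|].
  pose proof (le_P_inv (preorbit y k) ltac:(lra)). lra.
Qed.

Lemma orbit_preorbit (y : R) (k n : nat) : 0 <= y -> (n <= k)%nat ->
  orbit (preorbit y k) n = preorbit y (k - n).
Proof.
  intros Hy. induction n as [|n IH]; intro Hn; [simpl; rewrite Nat.sub_0_r; reflexivity|].
  simpl. rewrite IH by lia.
  replace (k - n)%nat with (S (k - S n)) by lia.
  simpl. apply P_inv_K. pose proof (preorbit_ge y (k - S n) Hy). lra.
Qed.

Lemma preorbit_exceed_or_ascent (y b : R) (k : nat) : 0 <= y ->
  b < preorbit y k \/ y + INR k * decr b <= preorbit y k.
Proof.
  intro Hy. induction k as [|k [Hexceed | Hasc]].
  - right. simpl. lra.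
  - left. simpl. pose proof (preorbit_ge y k Hy).
    pose proof (le_P_inv (preorbit y k) ltac:(lra)). lra.
  - set (z := preorbit y (S k)).
    assert (Hz : 0 <= z) by (pose proof (preorbit_ge y (S k) Hy); unfold z; lra).
    destruct (Rlt_le_dec b z) as [Hbz | Hzb]; [left; exact Hbz | right].
    assert (HPz : P z = preorbit y k) by (apply P_inv_K; pose proof (preorbit_ge y k Hy); lra).
    assert (decr b <= decr z) by (apply decr_antitone; lra).
    rewrite P_decr in HPz. rewrite S_INR. lra.
Qed.

Theorem mainTheorem5 :
  (forall a0 : R, 0 <= a0 ->
     exists N0 : nat,
       (forall n : nat, (n <= N0)%nat -> 0 <= orbit a0 n) /\
       0 <= orbit a0 N0 < 1 /\
       -(1/4) <= orbit a0 (S N0) < 0)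
  /\
  (forall a b : R, 0 <= a < 1 -> a < b ->
     exists (a0 : R) (N0 : nat),
       b < a0 /\
       (forall n : nat, (n <= N0)%nat -> 0 <= orbit a0 n) /\
       orbit a0 N0 = a).
Proof.
  split.
  - intros a0 Ha0.
    destruct (INR_archimed (decr a0) a0 (decr_gt0 a0 Ha0)) as [k Hk].
    destruct (orbit_exit_or_descent a0 k Ha0) as [Hexit | [Hnonneg Hdesc]];
      [exact Hexit|].
    pose proof (Hnonneg k (le_n k)). lra.
  - intros a b Ha Hab.
    destruct (INR_archimed (decr b) (b - a) (decr_gt0 b ltac:(lra))) as [k Hk].
    exists (preorbit a k), k. split; [|split].
    + destruct (preorbit_exceed_or_ascent a b k ltac:(lra)); lra.
    + intros n Hn. rewrite orbit_preorbit by (exact Hn || lra).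
      pose proof (preorbit_ge a (k - n) ltac:(lra)). lra.
    + rewrite orbit_preorbit, Nat.sub_diag by (lia || lra). reflexivity.
Qed.
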